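(* Let $T$ be a tree with $n>2$ vertices and let Algorithm 2 be applied to $T$ with gravity root $r$ (placed at the origin). Let $u$ be a vertex drawn on the $Y$-axis (i.e., with $x$-coordinate $0$), at position $(0,y_u)$, and let $\phi_u=a_2(u)-a_1(u)$. Put $B=(|T_u|-1)\cdot\frac{\pi}{2}\cdot\frac{n-\mathrm{odd}(n)}{n-1}\cdot\frac{1}{\phi_u}$. Then every vertex $w$ of $T_u$, drawn at $(x_w,y_w)$, satisfies $0\le y_w-y_u\le B$ and $|x_w|\le B$. (Equivalently, both the part of the drawing of $T_u$ lying in the closed first quadrant $x\ge0$ and the part lying in the closed second quadrant $x\le0$ fit in grids of side-length $B$.)
   Context: A vertex $r$ of an $n$-vertex tree $T$ is a gravity root if every connected component of $T\setminus r$ has at most $\frac{n}{2}$ vertices. $\mathrm{odd}(n)=1$ if $n$ is odd, $0$ otherwise. $T_v$ is the subtree rooted at $v$, $|T_v|$ its number of vertices. Strategy 1: for a non-leaf vertex $u$ with assigned $a_1(u)<a_2(u)$ and children $v_1,\dots,v_m$ in order, set $a_1(v_1)=a_1(u)$, $a_1(v_i)=a_2(v_{i-1})$ for $1<i\le m$, and $a_2(v_i)=a_1(v_i)+(a_2(u)-a_1(u))\cdot\frac{|T_{v_i}|}{|T_u|-1}$. Point rule $P_1(\theta_1,\theta_2)$ for $0\le\theta_1<\theta_2\le\frac{\pi}{2}$, with $d=\lceil\frac{1}{\theta_2-\theta_1}\rceil$: (i) if $\theta_2-\theta_1>\frac{\pi}{4}$: $(1,1)$; (ii) if $\arctan(\frac12)<\theta_2-\theta_1\le\frac{\pi}{4}$: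 $(1,2)$ if $\theta_1\ge\frac{\pi}{4}$, $(1,1)$ if $\arctan(\frac12)\le\theta_1<\frac{\pi}{4}$, $(2,1)$ if $\theta_1<\arctan(\frac12)$; (iii) if $\theta_2-\theta_1\le\arctan(\frac12)$: $(d,\lfloor\tan(\theta_1)d+1\rfloor)$ if $\theta_2\le\frac{\pi}{4}$, $(1,1)$ if $\theta_1<\frac{\pi}{4}<\theta_2$, $(\lfloor\tan(\frac{\pi}{2}-\theta_2)d+1\rfloor,d)$ if $\theta_1\ge\frac{\pi}{4}$. Point rule $P_2(\beta_1,\beta_2)$ for $0\le\beta_1<\beta_2\le\pi$: $(0,1)$ if $\beta_1<\frac{\pi}{2}<\beta_2$; $P_1(\beta_1,\beta_2)$ if $\beta_2\le\frac{\pi}{2}$; $(-x,y)$ with $(x,y)=P_1(\pi-\beta_2,\pi-\beta_1)$ if $\beta_1\ge\frac{\pi}{2}$. Algorithm 2 (input: a tree $T$, possibly with a cyclic order of neighbors at each vertex): choose a gravity root $r$ and root $T$ at $r$ (children ordered according to the given embedding, if any); set $a_1(r)=0$, $a_2(r)=\pi$, assign angles to all other vertices top-down by Strategy 1; place $r$ at $(0,0)$; top-down, place each child $v$ of an already placed vertex $u$ at (position of $u$) $+P_2(a_1(v),a_2(v))$. *)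

From Stdlib Require Import Reals List Arith.
Open Scope R_scope.

(* A rooted tree whose children are ordered (rose tree).  Rooting the input
   tree T at the chosen vertex r, with children ordered by the embedding,
   gives such a tree; conversely every such tree arises this way. *)
Inductive tree : Type := Node : list tree -> tree.

Definition children (t : tree) : list tree := match t with Node ts => ts end.

Fixpoint size (t : tree) : nat :=
  match t with Node ts => S (fold_right (fun c acc => (size c + acc)%nat) 0%nat ts) end.

(* r is a gravity root: every component of T \ r (= the subtree of a child of r)
   has at most n/2 vertices. *)
Definition gravity_rooted (t : tree) : Prop :=
  forall c, In c (children t) -> (2 * size c <= size t)%nat.

Definition floorR (x : R) : Z := Int_part x.
Definition ceilR (x : R) : Z := (- Int_part (- x))%Z.

Definition P1 (t1 t2 : R) : R * R :=
  let d := IZR (ceilR (1 / (t2 - t1))) in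
  if Rlt_dec (PI / 4) (t2 - t1) then (1, 1)
  else if Rlt_dec (atan (1 / 2)) (t2 - t1) then
    (if Rle_dec (PI / 4) t1 then (1, 2)
     else if Rle_dec (atan (1 / 2)) t1 then (1, 1)
     else (2, 1))
  else
    (if Rle_dec t2 (PI / 4) then (d, IZR (floorR (tan t1 * d + 1)))
     else if Rlt_dec t1 (PI / 4) then (1, 1)
     else (IZR (floorR (tan (PI / 2 - t2) * d + 1)), d)).

Definition P2 (b1 b2 : R) : R * R :=
  if Rle_dec b2 (PI / 2) then P1 b1 b2
  else if Rlt_dec b1 (PI / 2) then (0, 1)
  else let p := P1 (PI - b2) (PI - b1) in (- fst p, snd p).

Record vinfo : Type := VInfo {
  addr : list nat;   (* address of the vertex: child indices from the root *)
  ang1 : R;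
  ang2 : R;
  posx : R;
  posy : R;
  sub  : tree
}.

(* Algorithm 2 (Strategy 1 + point rule P2), applied top-down to the subtree t
   whose root has address ad, angles a1 < a2 and is placed at (x, y). *)
Fixpoint draw (t : tree) (ad : list nat) (a1 a2 x y : R) {struct t} : list vinfo :=
  match t with
  | Node ts =>
      VInfo ad a1 a2 x y t ::
      (fix go (cs : list tree) (k : nat) (b : R) {struct cs} : list vinfo :=
         match cs with
         | nil => nil
         | c :: cs' =>
             let b2 := b + (a2 - a1) * (INR (size c) / (INR (size t) - 1)) in
             let p := P2 b b2 in
             draw c (ad ++ k :: nil) b b2 (x + fst p) (y + snd p)
               ++ go cs' (S k) b2
         end) ts 0%nat a1
  end.

Definition algorithm2 (t : tree) : list vinfo := draw t nil 0 PI 0 0.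

Definition in_subtree (u w : vinfo) : Prop := exists s, addr w = addr u ++ s.

Definition oddR (n : nat) : R := if Nat.odd n then 1 else 0.

From Stdlib Require Import Reals Lra Lia List.
Open Scope R_scope.

(* An edge from a vertex to a child whose wedge [b1, b2] has width at most
   K >= PI/2 is a P2 step (dx, dy) with 0 <= dy <= K/(b2 - b1) and
   |dx| <= K/(b2 - b1): the rounded points of P1 have coordinates at most
   (PI/2)/(b2 - b1), and the vertical step (0, 1) costs 1 <= K/(b2 - b1).
   At a gravity root every child c gets the wedge width PI |T_c|/(n - 1),
   at most K := (PI/2) (n - odd n)/(n - 1), and Strategy 1 only narrows
   wedges further down.  By induction on the tree, all of T_u then lies above
   u within (|T_u| - 1) K/phi_u of it in each coordinate: a child c adds one
   edge K/phi_c to its own bound (|T_c| - 1) K/phi_c, and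
   |T_c| K/phi_c = (|T_u| - 1) K/phi_u. *)

Lemma Rle_div_of_mul_le a c p : 0 < p -> a * p <= c -> a <= c / p.
Proof.
  intros Hp H. apply (Rmult_le_reg_r p); [exact Hp |].
  unfold Rdiv. rewrite Rmult_assoc, Rinv_l by lra. lra.
Qed.

Lemma Rdiv_le_of_le_mul a c p : 0 < p -> a <= c * p -> a / p <= c.
Proof.
  intros Hp H. apply (Rmult_le_reg_r p); [exact Hp |].
  unfold Rdiv. rewrite Rmult_assoc, Rinv_l by lra. lra.
Qed.

Lemma cos_1_ge_half : 1 / 2 <= cos 1.
Proof.
  pose proof PI2_1.
  destruct (COS 1 ltac:(lra) ltac:(lra)) as [Hlb _].
  unfold cos_lb, cos_approx, cos_term in Hlb; simpl in Hlb. lra.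
Qed.

Lemma atan_half_le : atan (1 / 2) <= PI / 2 - 1.
Proof.
  pose proof PI2_1.
  assert (Hsin : 0 < sin 1 <= 1) by (split; [apply sin_gt_0 | apply SIN_bound]; lra).
  assert (Htan : 1 / 2 <= tan (PI / 2 - 1)).
  { unfold tan. rewrite sin_shift, cos_shift.
    apply Rle_div_of_mul_le; [lra |]. pose proof cos_1_ge_half. nra. }
  rewrite <- (atan_tan (PI / 2 - 1)) by lra.
  destruct Htan as [Hlt | <-]; [left; apply atan_increasing, Hlt | lra].
Qed.

Lemma ceilR_bounds z : z <= IZR (ceilR z) < z + 1.
Proof. unfold ceilR. rewrite opp_IZR. destruct (base_Int_part (- z)). lra. Qed.

Lemma floorR_bounds (D : Z) s : 0 <= s < 1 -> 0 < IZR D ->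
  0 <= IZR (floorR (s * IZR D + 1)) <= IZR D.
Proof.
  intros Hs HD. unfold floorR.
  destruct (base_Int_part (s * IZR D + 1)) as [Hle Hgt].
  assert (0 <= s * IZR D) by (apply Rmult_le_pos; lra).
  assert (s * IZR D < IZR D) by nra.
  split; [lra |].
  assert (Hlt : IZR (Int_part (s * IZR D + 1)) < IZR (D + 1)) by (rewrite plus_IZR; lra).
  apply lt_IZR in Hlt. apply IZR_le. lia.
Qed.

Lemma tan_bounds_quarter θ : 0 <= θ < PI / 4 -> 0 <= tan θ < 1.
Proof.
  intros [H0 H4]. pose proof PI_RGT_0. split.
  - destruct H0 as [H0 | <-]; [| rewrite tan_0; lra].
    rewrite <- tan_0. left. apply tan_increasing; lra.
  - rewrite <- tan_PI4. apply tan_increasing; lra.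
Qed.

Lemma P1_bounds t1 t2 : 0 <= t1 -> t1 < t2 -> t2 <= PI / 2 ->
  0 <= fst (P1 t1 t2) <= (PI / 2) / (t2 - t1) /\
  0 <= snd (P1 t1 t2) <= (PI / 2) / (t2 - t1).
Proof.
  intros H1 H12 H2. pose proof PI2_1. pose proof atan_half_le.
  unfold P1. set (phi := t2 - t1). cbv zeta.
  assert (Hphi : 0 < phi) by (unfold phi; lra).
  assert (Hm : forall v, v * phi <= PI / 2 -> v <= (PI / 2) / phi)
    by (intros; apply Rle_div_of_mul_le; assumption).
  assert (Hm1 := Hm 1 ltac:(unfold phi; lra)).
  destruct (Rlt_dec (PI / 4) phi) as [_ | Hwide]; [simpl; lra |].
  assert (Hm2 := Hm 2 ltac:(lra)).
  destruct (Rlt_dec (atan (1 / 2)) phi) as [_ | Hnarrow].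
  { destruct (Rle_dec (PI / 4) t1); [simpl; lra |].
    destruct (Rle_dec (atan (1 / 2)) t1); simpl; lra. }
  set (d := ceilR (1 / phi)).
  destruct (ceilR_bounds (1 / phi)) as [Hd1 Hd2]; fold d in Hd1, Hd2.
  assert (Hinv : 1 / phi * phi = 1) by (field; lra).
  assert (Hd0 : 0 < IZR d) by (assert (0 < 1 / phi) by (apply Rdiv_lt_0_compat; lra); lra).
  (* [d < 1/phi + 1] and [phi <= atan (1/2) <= PI/2 - 1] give [d * phi <= PI/2]. *)
  assert (IZR d * phi < (1 / phi + 1) * phi) by (apply Rmult_lt_compat_r; lra).
  assert (Hdm := Hm (IZR d) ltac:(lra)).
  destruct (Rle_dec t2 (PI / 4)) as [Ht2 | Ht2].
  { pose proof (floorR_bounds d (tan t1) (tan_bounds_quarter t1 ltac:(lra)) Hd0).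
    simpl; lra. }
  destruct (Rlt_dec t1 (PI / 4)); [simpl; lra |].
  pose proof (floorR_bounds d (tan (PI / 2 - t2))
                (tan_bounds_quarter (PI / 2 - t2) ltac:(lra)) Hd0).
  simpl; lra.
Qed.

Fixpoint tree_nested_ind (P : tree -> Prop)
  (H : forall ts, Forall P ts -> P (Node ts)) (t : tree) : P t :=
  match t with
  | Node ts => H ts ((fix all (l : list tree) : Forall P l :=
      match l with
      | nil => Forall_nil P
      | c :: cs => Forall_cons c (tree_nested_ind P H c) (all cs)
      end) ts)
  end.

Fixpoint sumsize (ts : list tree) : nat :=
  match ts with nil => 0%nat | c :: cs => (size c + sumsize cs)%nat end.

Lemma size_Node ts : size (Node ts) = S (sumsize ts).
Proof. reflexivity. Qed.

Lemma size_pos t : (0 < size t)%nat.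
Proof. destruct t. simpl. lia. Qed.

Lemma size_le_sumsize c cs : In c cs -> (size c <= sumsize cs)%nat.
Proof.
  induction cs as [|c' cs IH]; simpl; [tauto |].
  intros [<- | Hc]; [| specialize (IH Hc)]; lia.
Qed.

Lemma INR_size_Node_pred ts : INR (size (Node ts)) - 1 = INR (sumsize ts).
Proof. rewrite size_Node, S_INR. ring. Qed.

Definition child_width (t : tree) (phi : R) (c : tree) : R :=
  phi * (INR (size c) / (INR (size t) - 1)).

Definition children_width (t : tree) (phi : R) (cs : list tree) : R :=
  phi * (INR (sumsize cs) / (INR (size t) - 1)).

(* The case [b = 0] relies on Rocq's convention [a / 0 = 0]. *)
Lemma Rdiv_nonneg a b : 0 <= a -> 0 <= b -> 0 <= a / b.
Proof.
  intros Ha [Hb | <-]; [| rewrite Rdiv_0_r; lra].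
  apply Rmult_le_pos; [exact Ha | left; apply Rinv_0_lt_compat, Hb].
Qed.

Lemma INR_size_pred_nonneg t : 0 <= INR (size t) - 1.
Proof. destruct t as [ts]. rewrite INR_size_Node_pred. apply pos_INR. Qed.

Lemma child_width_nonneg t phi c : 0 <= phi -> 0 <= child_width t phi c.
Proof.
  intros Hphi. apply Rmult_le_pos, Rdiv_nonneg;
    [exact Hphi | apply pos_INR | apply INR_size_pred_nonneg].
Qed.

Lemma children_width_nonneg t phi cs : 0 <= phi -> 0 <= children_width t phi cs.
Proof.
  intros Hphi. apply Rmult_le_pos, Rdiv_nonneg;
    [exact Hphi | apply pos_INR | apply INR_size_pred_nonneg].
Qed.

Lemma children_width_cons t phi c cs :
  children_width t phi (c :: cs) = child_width t phi c + children_width t phi cs.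
Proof. unfold children_width, child_width. simpl sumsize. rewrite plus_INR. unfold Rdiv. ring. Qed.

Lemma children_width_Node ts phi c :
  In c ts -> children_width (Node ts) phi ts = phi.
Proof.
  intros Hc. unfold children_width. rewrite INR_size_Node_pred.
  assert (0 < INR (sumsize ts))
    by (apply lt_0_INR; pose proof (size_pos c); pose proof (size_le_sumsize c ts Hc); lia).
  field. lra.
Qed.

Lemma child_width_pos t phi c : 0 < phi -> In c (children t) -> 0 < child_width t phi c.
Proof.
  destruct t as [ts]. intros Hphi Hc. unfold child_width. rewrite INR_size_Node_pred.
  pose proof (size_pos c). pose proof (size_le_sumsize c ts Hc).
  apply Rmult_lt_0_compat, Rdiv_lt_0_compat; [exact Hphi | apply lt_0_INR; lia ..].
Qed.

Lemma child_width_le t phi c : 0 <= phi -> In c (children t) -> child_width t phi c <= phi.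
Proof.
  destruct t as [ts]. intros Hphi Hc. unfold child_width. rewrite INR_size_Node_pred.
  pose proof (size_pos c). pose proof (size_le_sumsize c ts Hc).
  assert (Hle : INR (size c) <= INR (sumsize ts)) by (apply le_INR; lia).
  assert (0 < INR (size c)) by (apply lt_0_INR; lia).
  rewrite <- (Rmult_1_r phi) at 2. apply Rmult_le_compat_l; [exact Hphi |].
  apply Rdiv_le_of_le_mul; lra.
Qed.

Definition draw_child (c : tree) (ad : list nat) (b1 b2 x y : R) : list vinfo :=
  draw c ad b1 b2 (x + fst (P2 b1 b2)) (y + snd (P2 b1 b2)).

(* The inner fixpoint of [draw], so that [draw_Node] holds by conversion. *)
Definition draw_children (t : tree) (ad : list nat) (a1 a2 x y : R) :=
  fix go (cs : list tree) (k : nat) (b : R) {struct cs} : list vinfo :=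
    match cs with
    | nil => nil
    | c :: cs' =>
        let b' := b + child_width t (a2 - a1) c in
        draw_child c (ad ++ k :: nil) b b' x y ++ go cs' (S k) b'
    end.

Lemma draw_Node ts ad a1 a2 x y :
  draw (Node ts) ad a1 a2 x y =
  VInfo ad a1 a2 x y (Node ts) :: draw_children (Node ts) ad a1 a2 x y ts 0 a1.
Proof. reflexivity. Qed.

Lemma draw_children_cons t ad a1 a2 x y c cs k b :
  draw_children t ad a1 a2 x y (c :: cs) k b =
  draw_child c (ad ++ k :: nil) b (b + child_width t (a2 - a1) c) x y ++
  draw_children t ad a1 a2 x y cs (S k) (b + child_width t (a2 - a1) c).
Proof. reflexivity. Qed.

Lemma draw_head t ad a1 a2 x y : In (VInfo ad a1 a2 x y t) (draw t ad a1 a2 x y).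
Proof. destruct t. now left. Qed.

Lemma draw_children_addr t ad a1 a2 x y cs k b w :
  (forall c, In c cs -> forall ad' b1 b2 x' y' w',
     In w' (draw c ad' b1 b2 x' y') -> exists s, addr w' = ad' ++ s) ->
  In w (draw_children t ad a1 a2 x y cs k b) ->
  exists j s, (k <= j)%nat /\ addr w = ad ++ j :: s.
Proof.
  revert k b. induction cs as [|c cs IH]; intros k b Hcs Hw; [destruct Hw |].
  rewrite draw_children_cons in Hw. apply in_app_or in Hw as [Hw | Hw].
  - destruct (Hcs c (or_introl eq_refl) _ _ _ _ _ _ Hw) as [s Hs].
    exists k, s. split; [lia |]. now rewrite Hs, <- app_assoc.
  - destruct (IH (S k) _ (fun c' Hc' => Hcs c' (or_intror Hc')) Hw) as (j & s & Hj & Hs).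
    exists j, s. split; [lia | exact Hs].
Qed.

Lemma draw_addr t : forall ad a1 a2 x y w,
  In w (draw t ad a1 a2 x y) -> exists s, addr w = ad ++ s.
Proof.
  induction t as [ts IH] using tree_nested_ind. rewrite Forall_forall in IH.
  intros ad a1 a2 x y w Hw. rewrite draw_Node in Hw. destruct Hw as [<- | Hw].
  - exists nil. now rewrite app_nil_r.
  - destruct (draw_children_addr _ _ _ _ _ _ _ _ _ _ IH Hw) as (j & s & _ & Hs). eauto.
Qed.

Lemma draw_child_addr c ad k b1 b2 x y w :
  In w (draw_child c (ad ++ k :: nil) b1 b2 x y) -> exists s, addr w = ad ++ k :: s.
Proof.
  intros Hw. destruct (draw_addr _ _ _ _ _ _ _ Hw) as [s Hs].
  exists s. now rewrite Hs, <- app_assoc.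
Qed.

Lemma in_subtree_refl w : in_subtree w w.
Proof. exists nil. now rewrite app_nil_r. Qed.

Lemma in_subtree_same_branch u w ad j k s1 s2 :
  addr u = ad ++ j :: s1 -> addr w = ad ++ k :: s2 -> in_subtree u w -> j = k.
Proof.
  intros Hu Hw [s Hs]. rewrite Hw, Hu, <- app_assoc in Hs.
  apply app_inv_head in Hs. now injection Hs.
Qed.

Lemma in_subtree_addr_length u w :
  in_subtree u w -> (length (addr u) <= length (addr w))%nat.
Proof. intros [s ->]. rewrite length_app. lia. Qed.

Lemma draw_children_common_branch t ad a1 a2 x y cs k b u w :
  0 <= a2 - a1 ->
  In u (draw_children t ad a1 a2 x y cs k b) ->
  In w (draw_children t ad a1 a2 x y cs k b) ->
  in_subtree u w ->
  exists j c b', In c cs /\ b <= b' /\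
    b' + child_width t (a2 - a1) c <= b + children_width t (a2 - a1) cs /\
    In u (draw_child c (ad ++ j :: nil) b' (b' + child_width t (a2 - a1) c) x y) /\
    In w (draw_child c (ad ++ j :: nil) b' (b' + child_width t (a2 - a1) c) x y).
Proof.
  intros Hphi. revert k b.
  induction cs as [|c cs IH]; intros k b Hu Hw Hsub; [destruct Hu |].
  rewrite draw_children_cons in Hu, Hw. rewrite children_width_cons.
  pose proof (child_width_nonneg t _ c Hphi).
  pose proof (children_width_nonneg t _ cs Hphi).
  assert (Hrest : forall v, In v (draw_children t ad a1 a2 x y cs (S k)
                                   (b + child_width t (a2 - a1) c)) ->
                  exists j s, (S k <= j)%nat /\ addr v = ad ++ j :: s)
    by (intros v; apply draw_children_addr; intros c' _; apply draw_addr).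
  apply in_app_or in Hu as [Hu | Hu]; apply in_app_or in Hw as [Hw | Hw].
  - exists k, c, b. repeat split; [now left | lra | lra | exact Hu | exact Hw].
  - exfalso. destruct (draw_child_addr _ _ _ _ _ _ _ _ Hu) as [s1 Hs1].
    destruct (Hrest w Hw) as (j & s2 & Hj & Hs2).
    pose proof (in_subtree_same_branch _ _ _ _ _ _ _ Hs1 Hs2 Hsub). lia.
  - exfalso. destruct (draw_child_addr _ _ _ _ _ _ _ _ Hw) as [s1 Hs1].
    destruct (Hrest u Hu) as (j & s2 & Hj & Hs2).
    pose proof (in_subtree_same_branch _ _ _ _ _ _ _ Hs2 Hs1 Hsub). lia.
  - destruct (IH (S k) _ Hu Hw Hsub) as (j & c' & b' & Hc' & Hb' & Hb'' & Hu' & Hw').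
    exists j, c', b'. repeat split; [now right | lra | lra | exact Hu' | exact Hw'].
Qed.

Section Spread.

Variable K : R.
Hypothesis HK : PI / 2 <= K.

Lemma P2_step_bounds b1 b2 : 0 <= b1 -> b1 < b2 -> b2 <= PI -> b2 - b1 <= K ->
  0 <= snd (P2 b1 b2) <= K * (1 / (b2 - b1)) /\
  Rabs (fst (P2 b1 b2)) <= K * (1 / (b2 - b1)).
Proof.
  intros H1 H12 H2 Hw.
  assert (Hphi : 0 < b2 - b1) by lra.
  assert (HPK : (PI / 2) / (b2 - b1) <= K * (1 / (b2 - b1))).
  { unfold Rdiv. rewrite Rmult_1_l.
    apply Rmult_le_compat_r; [left; apply Rinv_0_lt_compat |]; lra. }
  unfold P2. destruct (Rle_dec b2 (PI / 2)) as [Hr | Hr].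
  { destruct (P1_bounds b1 b2 H1 H12 Hr). rewrite Rabs_pos_eq; lra. }
  destruct (Rlt_dec b1 (PI / 2)).
  { assert (1 <= K * (1 / (b2 - b1))).
    { rewrite Rmult_div_assoc, Rmult_1_r. apply Rle_div_of_mul_le; lra. }
    simpl. rewrite Rabs_R0. lra. }
  destruct (P1_bounds (PI - b2) (PI - b1)) as [Hx Hy]; [lra .. |].
  replace (PI - b1 - (PI - b2)) with (b2 - b1) in Hx, Hy by ring.
  simpl. rewrite Rabs_Ropp, Rabs_pos_eq; lra.
Qed.

(* Only the child wedges are bounded by [K]: the root wedge [0, PI] is wider. *)
Definition narrow_wedge (t : tree) (a1 a2 : R) : Prop :=
  0 <= a1 < a2 /\ a2 <= PI /\
  forall c, In c (children t) -> child_width t (a2 - a1) c <= K.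

Definition spread (u : vinfo) : R :=
  (INR (size (sub u)) - 1) * K * (1 / (ang2 u - ang1 u)).

Definition within_spread (u w : vinfo) : Prop :=
  0 <= posy w - posy u <= spread u /\ Rabs (posx w - posx u) <= spread u.

Lemma within_spread_refl u : ang1 u < ang2 u -> within_spread u u.
Proof.
  intros Hu. pose proof PI_RGT_0. unfold within_spread, spread.
  rewrite !Rminus_diag, Rabs_R0.
  assert (0 <= (INR (size (sub u)) - 1) * K * (1 / (ang2 u - ang1 u))).
  { apply Rmult_le_pos; [apply Rmult_le_pos; [apply INR_size_pred_nonneg | lra] |].
    left. apply Rdiv_lt_0_compat; lra. }
  lra.
Qed.

Lemma narrow_wedge_child t a1 a2 c b :
  narrow_wedge t a1 a2 -> In c (children t) -> a1 <= b ->
  b + child_width t (a2 - a1) c <= a2 ->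
  narrow_wedge c b (b + child_width t (a2 - a1) c).
Proof.
  intros (Ha & Ha2 & Hch) Hc Hb Hb'.
  pose proof (child_width_pos t (a2 - a1) c ltac:(lra) Hc).
  refine (conj (conj _ _) (conj _ _)); [lra .. |]. intros g Hg.
  replace (b + child_width t (a2 - a1) c - b) with (child_width t (a2 - a1) c) by ring.
  eapply Rle_trans; [apply child_width_le; [lra | exact Hg] | apply Hch, Hc].
Qed.

Lemma spread_child t phi c : 0 < phi -> In c (children t) ->
  (INR (size c) - 1) * K * (1 / child_width t phi c) + K * (1 / child_width t phi c) =
  (INR (size t) - 1) * K * (1 / phi).
Proof.
  destruct t as [ts]. intros Hphi Hc. unfold child_width. rewrite INR_size_Node_pred.
  pose proof (size_pos c). pose proof (size_le_sumsize c ts Hc).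
  assert (0 < INR (size c)) by (apply lt_0_INR; lia).
  assert (0 < INR (sumsize ts)) by (apply lt_0_INR; lia).
  field. repeat split; lra.
Qed.

Lemma draw_children_branch ts ad a1 a2 x y u w :
  narrow_wedge (Node ts) a1 a2 ->
  In u (draw_children (Node ts) ad a1 a2 x y ts 0 a1) ->
  In w (draw_children (Node ts) ad a1 a2 x y ts 0 a1) ->
  in_subtree u w ->
  exists j c b, In c ts /\
    narrow_wedge c b (b + child_width (Node ts) (a2 - a1) c) /\
    In u (draw_child c (ad ++ j :: nil) b (b + child_width (Node ts) (a2 - a1) c) x y) /\
    In w (draw_child c (ad ++ j :: nil) b (b + child_width (Node ts) (a2 - a1) c) x y).
Proof.
  intros Hwedge Hu Hw Hsub.
  assert (Hphi : 0 <= a2 - a1) by (destruct Hwedge as ((_ & ?) & _); lra).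
  destruct (draw_children_common_branch _ _ _ _ _ _ _ _ _ _ _ Hphi Hu Hw Hsub)
    as (j & c & b & Hc & Hb & Hb' & Hu' & Hw').
  rewrite (children_width_Node ts _ c Hc) in Hb'.
  exists j, c, b. refine (conj Hc (conj _ (conj Hu' Hw'))).
  apply narrow_wedge_child; [exact Hwedge | exact Hc | exact Hb | lra].
Qed.

Lemma within_spread_through_child ts ad ad' a1 a2 x y c b w :
  narrow_wedge (Node ts) a1 a2 -> In c ts ->
  let b' := b + child_width (Node ts) (a2 - a1) c in
  narrow_wedge c b b' ->
  within_spread (VInfo ad' b b' (x + fst (P2 b b')) (y + snd (P2 b b')) c) w ->
  within_spread (VInfo ad a1 a2 x y (Node ts)) w.
Proof.
  intros ((Ha1 & Ha12) & _ & Hch) Hc b' ((Hb & Hbb') & Hb' & _) [[Hy0 Hy1] Hx].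
  assert (Hwidth : b' - b = child_width (Node ts) (a2 - a1) c) by (unfold b'; ring).
  assert (HwK : b' - b <= K) by (rewrite Hwidth; apply Hch, Hc).
  destruct (P2_step_bounds b b' Hb Hbb' Hb' HwK) as [[Hpy0 Hpy1] Hpx].
  pose proof (spread_child (Node ts) (a2 - a1) c ltac:(lra) Hc) as Hsum.
  unfold within_spread, spread in *; cbn [posx posy sub ang1 ang2] in *.
  rewrite Hwidth in Hy1, Hx, Hpy1, Hpx.
  split; [lra |].
  replace (posx w - x) with ((posx w - (x + fst (P2 b b'))) + fst (P2 b b')) by ring.
  eapply Rle_trans; [apply Rabs_triang | lra].
Qed.

Lemma draw_within_spread t : forall ad a1 a2 x y, narrow_wedge t a1 a2 ->
  forall u w, In u (draw t ad a1 a2 x y) -> In w (draw t ad a1 a2 x y) ->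
  in_subtree u w -> within_spread u w.
Proof.
  induction t as [ts IH] using tree_nested_ind. rewrite Forall_forall in IH.
  intros ad a1 a2 x y Hwedge u w Hu Hw Hsub. rewrite draw_Node in Hu, Hw.
  assert (Hroot : forall v, In v (draw_children (Node ts) ad a1 a2 x y ts 0 a1) ->
                  within_spread (VInfo ad a1 a2 x y (Node ts)) v).
  { intros v Hv.
    destruct (draw_children_branch _ _ _ _ _ _ _ _ Hwedge Hv Hv (in_subtree_refl v))
      as (j & c & b & Hc & Hcw & _ & Hv').
    apply (within_spread_through_child _ _ (ad ++ j :: nil) _ _ _ _ c b v Hwedge Hc Hcw).
    eapply (IH c Hc); [exact Hcw | apply draw_head | exact Hv' |].
    exact (draw_addr _ _ _ _ _ _ _ Hv'). }
  destruct Hu as [<- | Hu]; destruct Hw as [<- | Hw].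
  - apply within_spread_refl. apply Hwedge.
  - apply Hroot, Hw.
  - exfalso. destruct (draw_children_addr _ _ _ _ _ _ _ _ _ _ (fun c _ => draw_addr c) Hu)
      as (j & s & _ & Hs).
    apply in_subtree_addr_length in Hsub. rewrite Hs, length_app in Hsub. simpl in Hsub. lia.
  - destruct (draw_children_branch _ _ _ _ _ _ _ _ Hwedge Hu Hw Hsub)
      as (j & c & b & Hc & Hcw & Hu' & Hw').
    exact (IH c Hc _ _ _ _ _ Hcw u w Hu' Hw' Hsub).
Qed.

End Spread.

Lemma gravity_child_bound t c : gravity_rooted t -> In c (children t) ->
  2 * INR (size c) <= INR (size t) - oddR (size t).
Proof.
  intros Hg Hc. specialize (Hg c Hc). unfold oddR.
  destruct (Nat.odd (size t)) eqn:Hodd.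
  - assert (Hne : (2 * size c <> size t)%nat)
      by (intros E; rewrite <- E, Nat.odd_mul in Hodd; discriminate).
    assert (Hlt : (2 * size c + 1 <= size t)%nat) by lia.
    apply le_INR in Hlt. rewrite plus_INR, mult_INR in Hlt. simpl in Hlt. lra.
  - apply le_INR in Hg. rewrite mult_INR in Hg. simpl in Hg. lra.
Qed.

Definition gravity_width (n : nat) : R :=
  PI / 2 * ((INR n - oddR n) / (INR n - 1)).

Lemma gravity_width_ge n : (1 < n)%nat -> PI / 2 <= gravity_width n.
Proof.
  intros Hn. pose proof PI_RGT_0. apply lt_INR in Hn. simpl in Hn.
  assert (0 <= oddR n <= 1) by (unfold oddR; destruct Nat.odd; lra).
  unfold gravity_width. rewrite <- (Rmult_1_r (PI / 2)) at 1.
  apply Rmult_le_compat_l; [lra | apply Rle_div_of_mul_le; lra].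
Qed.

Lemma gravity_root_narrow_wedge t :
  (1 < size t)%nat -> gravity_rooted t -> narrow_wedge (gravity_width (size t)) t 0 PI.
Proof.
  intros Hn Hgrav. pose proof PI_RGT_0. apply lt_INR in Hn. simpl in Hn.
  refine (conj (conj _ _) (conj _ _)); [lra .. |].
  intros c Hc. pose proof (gravity_child_bound t c Hgrav Hc).
  assert (0 < PI / (INR (size t) - 1)) by (apply Rdiv_lt_0_compat; lra).
  unfold child_width, gravity_width.
  replace ((PI - 0) * (INR (size c) / (INR (size t) - 1)))
    with (PI / (INR (size t) - 1) * INR (size c)) by (field; lra).
  replace (PI / 2 * ((INR (size t) - oddR (size t)) / (INR (size t) - 1)))
    with (PI / (INR (size t) - 1) * ((INR (size t) - oddR (size t)) / 2)) by (field; lra).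
  apply Rmult_le_compat_l; lra.
Qed.

Theorem lemma12 (t : tree) :
  (2 < size t)%nat ->
  gravity_rooted t ->
  forall u, In u (algorithm2 t) -> posx u = 0 ->
  let n := INR (size t) in
  let B := (INR (size (sub u)) - 1) * (PI / 2) * ((n - oddR (size t)) / (n - 1))
           * (1 / (ang2 u - ang1 u)) in
  forall w, In w (algorithm2 t) -> in_subtree u w ->
    0 <= posy w - posy u <= B /\ Rabs (posx w) <= B.
Proof.
  intros Hn Hgrav u Hu Hux n B w Hw Hsub.
  assert (Hn1 : (1 < size t)%nat) by lia.
  destruct (draw_within_spread _ (gravity_width_ge _ Hn1) t nil 0 PI 0 0
              (gravity_root_narrow_wedge t Hn1 Hgrav) u w Hu Hw Hsub) as [Hy Hx].
  rewrite Hux, Rminus_0_r in Hx.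
  assert (HB : B = spread (gravity_width (size t)) u)
    by (unfold B, n, spread, gravity_width; ring).
  rewrite HB. split; assumption.
Qed.
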